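(* Let $p,q$ be integers with $2\le q<p$ and $q\mid p$, and let $s=\frac{\log q}{\log p}$. There exist uncountably many regular mappings $\tau$ with $\max_{n\ge1}\ell_n<\infty$, giving pairwise distinct sets $\Lambda(\tau)$ (regular spectra of $\mu_{p,q}$), such that $D_s^+(\Lambda(\tau))>0$.
   Context: $\mu_{p,q}$ denotes the self-similar probability measure on $\mathbb R$ satisfying $\mu=\frac1q\sum_{d\in\mathcal D}\mu\circ f_d^{-1}$ with $f_d(x)=p^{-1}(x+d)$ and $\mathcal D=\frac pq\{0,1,\ldots,q-1\}$. Upper $r$-Beurling density: for a countable $\Lambda\subseteq\mathbb R$ and $r>0$, $D_r^+(\Lambda)=\limsup_{h\to\infty}\sup_{x\in\mathbb R}\frac{\#(\Lambda\cap B(x,h))}{h^r}$, where $B(x,h)=(x-h,x+h)$. Let $\Sigma_q=\{0,1,\ldots,q-1\}$, $\Sigma_q^n$ the words of length $n$, and $\Sigma_q^\ast=\bigcup_{n\ge1}\Sigma_q^n$. A map $\tau:\Sigma_q^\ast\to\{-1,0,\ldots,p-2\}$ is a regular mapping if (i) $\tau(0^n)=0$ for all $n\ge1$; (ii) $\tau(i_1\cdots i_n)\in i_n+q\mathbb Z$ for every word $i_1\cdots i_n$; (iii) for every $I\in\Sigma_q^\ast$, $\tau(I0^l)=0$ for all sufficiently large $l$. For each $n\ge1$ write $n=i_1+i_2q+\cdots+i_Nq^{N-1}$ with $i_N\ne0$ and $I=i_1\cdots i_N$. Set $\lambda_0=0$ and $\lambda_n=\tau(I|_1)+\tau(I|_2)p+\cdots+\tau(I|_N)p^{N-1}+\sum_{k=N}^\infty\tau(I0^{k-N+1})p^k$,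 where $I|_j=i_1\cdots i_j$; let $\Lambda(\tau)=\{\lambda_n\}_{n\ge0}$ and $\ell_n=\#\{k\ge1:\tau(I0^k)\ne0\}$. A regular spectrum is a set $\Lambda(\tau)$ with $\tau$ regular and $\max_{n\ge1}\ell_n<\infty$; by a known result (Dai–He–Lai) such sets are spectra of $\mu_{p,q}$, i.e. $\{e^{2\pi i\lambda x}\}_{\lambda\in\Lambda(\tau)}$ is an orthonormal basis of $L^2(\mu_{p,q})$. *)

From HB Require Import structures.
From mathcomp Require Import all_boot all_order all_algebra.
From mathcomp Require Import all_classical all_reals all_analysis.
Set Implicit Arguments. Unset Strict Implicit. Unset Printing Implicit Defensive.
Import Order.TTheory GRing.Theory Num.Theory numFieldNormedType.Exports.
Local Open Scope classical_set_scope.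
Local Open Scope ring_scope.

(* Words over Sigma_q are lists of naturals; a word i_1 ... i_n is the list
   [:: i_1; ...; i_n] (i_1 first).  A mapping tau : Sigma_q^* -> Z is a
   function on lists; only its values on valid words matter. *)
Definition word_ok (q : nat) (w : seq nat) : bool :=
  (w != [::]) && all (fun i => i < q)%N w.

Definition last_digit (w : seq nat) : nat := last 0%N w.

Definition regular_mapping (p q : nat) (tau : seq nat -> int) : Prop :=
  [/\ (forall w, word_ok q w -> (-1 <= tau w)%R /\ (tau w <= (p%:Z - 2))%R),
      (forall n, (1 <= n)%N -> tau (nseq n 0%N) = 0),
      (forall w, word_ok q w -> (q%:Z %| (tau w - (last_digit w)%:Z))%Z) &
      (forall w, word_ok q w -> exists L : nat, forall l, (L <= l)%N ->
          tau (w ++ nseq l 0%N) = 0)].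

(* base-q digits of n, least significant first: n = i_1 + i_2 q + ... ,
   with last digit nonzero (empty list for n = 0). *)
Fixpoint digits_aux (q fuel n : nat) : seq nat :=
  match fuel with
  | 0%N => [::]
  | fuel'.+1 => if n == 0%N then [::] else (n %% q)%N :: digits_aux q fuel' (n %/ q)%N
  end.
Definition digits (q n : nat) : seq nat := digits_aux q n n.

Definition lambda_seq (R : realType) (p q : nat) (tau : seq nat -> int) (n : nat) : R :=
  if n == 0%N then 0 else
  let I := digits q n in
  let N := size I in
  \sum_(1 <= j < N.+1) (tau (take j I))%:~R * (p%:R ^+ j.-1)
  + limn (fun M : nat =>
      \sum_(N <= k < M) ((tau (I ++ nseq (k - N).+1 0%N))%:~R * (p%:R ^+ k) : R)).

Definition Lambda (R : realType) (p q : nat) (tau : seq nat -> int) : set R :=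
  range (lambda_seq R p q tau).

(* ell_n <= M, where ell_n = #{k >= 1 : tau(I 0^k) <> 0}: every finite
   truncation {1,...,K} contains at most M such k. *)
Definition ell_le (p q : nat) (tau : seq nat -> int) (n M : nat) : Prop :=
  forall K : nat,
    (count (fun k => tau (digits q n ++ nseq k 0%N) != 0) (iota 1 K) <= M)%N.

Definition bounded_ell (p q : nat) (tau : seq nat -> int) : Prop :=
  exists M : nat, forall n : nat, (1 <= n)%N -> ell_le p q tau n M.

(* upper r-Beurling density, as an extended real:
   limsup_{h -> oo} sup_x #(L ∩ (x-h, x+h)) / h^r *)
Definition upper_beurling_density (R : realType) (r : R) (L : set R) : \bar R :=
  limf_esup
    (fun h : R => ereal_sup [set ((\esum_(y in L `&` [set y : R | (x - h < y < x + h)%R]) 1%E)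
                                    * ((h `^ r)^-1)%:E)%E | x in [set: R]])
    (pinfty_nbhs R).

From HB Require Import structures.
From mathcomp Require Import all_boot all_order all_algebra.
From mathcomp Require Import all_classical all_reals all_analysis.
From mathcomp Require Import zify ring.
Import Order.TTheory GRing.Theory Num.Theory.
Local Open Scope classical_set_scope.
Local Open Scope ring_scope.

(* For c : nat -> bool let tau_c(0^k (q-1)) = -1 when c k holds and let
   tau_c(w) be the last digit of w otherwise.  This mapping is regular and
   vanishes on every word I 0^k, so all ell_n are 0 and lambda_n is the finite
   sum word_value p tau_c (digits q n).
   - Injectivity: such a sum is either nonnegative or equal to -p^k with c k,
     while the word 0^k (q-1), i.e. n = (q-1) q^k, realises -p^k whenever
     c k holds.  So -p^k lies in Lambda(tau_c) iff c k, and Lambda(tau_c)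
     determines c.
   - Density: if c 0 is false, lambda_{qk+1} = 1 + p * rebase k, where rebase
     reads the base-q digits of k in base p.  For k < q^N these are q^N
     distinct points of (-p^(N+1), p^(N+1)), whence density >= 1/q.
   - Uncountability: c ranges over {c | c 0 = false}, which contains a copy of
     nat -> bool, uncountable by Cantor's diagonal argument. *)

(* The finite part of lambda_n: for a word I = i_1 ... i_N,
   word_value p t I = sum_{j=1}^N t(I|_j) p^(j-1). *)
Definition word_value (p : nat) (t : seq nat -> int) (I : seq nat) : int :=
  \sum_(1 <= j < (size I).+1) t (take j I) * (p%:Z ^+ j.-1).

Fixpoint base_value (p : nat) (I : seq nat) : nat :=
  if I is d :: I' then (d + p * base_value p I')%N else 0%N.

Definition special_word (q k : nat) : seq nat := rcons (nseq k 0%N) q.-1.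

Definition tau_of (q : nat) (c : nat -> bool) (w : seq nat) : int :=
  if (w == special_word q (size w).-1) && c (size w).-1 then -1
  else (last_digit w)%:Z.

Definition shift (c : nat -> bool) : nat -> bool := fun m => c m.+1.

Section WordValue.
Variable p : nat.

Lemma word_value_nil t : word_value p t [::] = 0.
Proof. by rewrite /word_value big_geq. Qed.

Lemma word_value_cons t d I :
  word_value p t (d :: I) = t [:: d] + p%:Z * word_value p (fun w => t (d :: w)) I.
Proof.
rewrite /word_value /= big_nat_recl // expr0 mulr1 /= take0; congr (_ + _).
rewrite mulr_sumr; apply: eq_big_nat => i /andP[i1 _].
by case: i i1 => // i _ /=; rewrite exprS mulrCA.
Qed.

Lemma word_value_ext t1 t2 I : (forall w, w != [::] -> t1 w = t2 w) ->
  word_value p t1 I = word_value p t2 I.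
Proof.
move=> e; rewrite /word_value; apply: eq_big_nat => i /andP[i1 iI]; rewrite e //.
rewrite ltnS in iI; rewrite -size_eq0 size_take -lt0n.
by case: ifP => // _; exact: leq_trans iI.
Qed.

Lemma word_value_last d I :
  word_value p (fun w => (last d w)%:Z) I = (base_value p I)%:Z.
Proof.
elim: I d => [|e I IH] d; first by rewrite word_value_nil.
by rewrite word_value_cons /= IH PoszD PoszM.
Qed.

End WordValue.

Section TauOf.
Variables (p q : nat) (c : nat -> bool).
Hypothesis q2 : (2 <= q)%N.

Lemma qm1_neq0 : q.-1 != 0%N.
Proof. by case: q q2 => [|[|]]. Qed.

Lemma tau_of_cons0 w : tau_of q c (0%N :: w) = tau_of q (shift c) w.
Proof.
rewrite /tau_of /special_word /shift; case: w => [|a w] /=.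
  by rewrite eqseq_cons eq_sym (negbTE qm1_neq0).
by rewrite eqseq_cons eqxx.
Qed.

Lemma tau_of_consd d w : d != 0%N -> w != [::] -> tau_of q c (d :: w) = (last d w)%:Z.
Proof.
move=> d0; case: w => // a w _.
by rewrite /tau_of /special_word /= eqseq_cons (negbTE d0).
Qed.

Lemma tau_of_tail I k : tau_of q c (I ++ nseq k.+1 0%N) = 0.
Proof.
have hl : last_digit (I ++ nseq k.+1 0%N) = 0%N.
  by rewrite /last_digit last_cat; elim: k (last 0%N I) => //= k IH _; exact: IH.
rewrite /tau_of; case: ifP => [/andP[/eqP hw _]|_]; last by rewrite hl.
move: hl; rewrite hw /last_digit /special_word last_rcons => /eqP.
by rewrite (negbTE qm1_neq0).
Qed.

Lemma word_value_tau_cons0 I :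
  word_value p (tau_of q c) (0%N :: I) = p%:Z * word_value p (tau_of q (shift c)) I.
Proof.
rewrite word_value_cons (_ : tau_of q c [:: 0%N] = 0) ?add0r; last first.
  exact: tau_of_tail [::] 0.
congr (_ * _); apply: word_value_ext => w _; exact: tau_of_cons0.
Qed.

Lemma word_value_tau_consd d I : d != 0%N ->
  word_value p (tau_of q c) (d :: I) =
  tau_of q c [:: d] + p%:Z * (base_value p I)%:Z.
Proof.
move=> d0; rewrite word_value_cons -(word_value_last p d I); congr (_ + _ * _).
by apply: word_value_ext => w w0; rewrite tau_of_consd.
Qed.

End TauOf.

Section SignDichotomy.
Variables p q : nat.
Hypotheses (q2 : (2 <= q)%N) (p2 : (2 <= p)%N).

Lemma word_value_tau_cases c I :
  0 <= word_value p (tau_of q c) I \/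
  exists2 k, c k & word_value p (tau_of q c) I = - p%:Z ^+ k.
Proof.
elim: I c => [|d I IH] c; first by left; rewrite word_value_nil.
have [->|d0] := eqVneq d 0%N.
  rewrite word_value_tau_cons0 //; case: (IH (shift c)) => [pos|[k ck ->]].
    by left; rewrite mulr_ge0.
  by right; exists k.+1 => //; rewrite exprS mulrN.
rewrite word_value_tau_consd // /tau_of /=.
case: ifP => [/andP[_ c0]|_]; last by left; rewrite addr_ge0.
have [->|v0] := posnP (base_value p I).
  by right; exists 0%N; rewrite // mulr0 addr0 expr0.
have : (0 < p * base_value p I)%N by rewrite muln_gt0 v0 (ltnW p2).
by left; lia.
Qed.

Lemma word_value_tau_neg_pow c I k :
  word_value p (tau_of q c) I = - p%:Z ^+ k -> c k.
Proof.
move=> e; have [|[m cm]] := word_value_tau_cases c I; rewrite e.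
  by rewrite oppr_ge0 leNgt exprn_gt0 //; lia.
move/oppr_inj/ieexprIn => -> //; apply/eqP; lia.
Qed.

End SignDichotomy.

Lemma word_value_special p q c k : (2 <= q)%N ->
  word_value p (tau_of q c) (special_word q k) =
  if c k then - p%:Z ^+ k else (q.-1)%:Z * p%:Z ^+ k.
Proof.
move=> q2; elim: k c => [|k IH] c.
  rewrite word_value_tau_consd ?qm1_neq0 // /tau_of /= eqxx mulr0 addr0 expr0 mulr1.
  by case: (c 0%N).
rewrite word_value_tau_cons0 // IH /shift exprS; case: (c k.+1); ring.
Qed.

Section Regularity.
Variables (p q : nat) (c : nat -> bool).
Hypotheses (q2 : (2 <= q)%N) (qp : (q < p)%N).

Lemma tau_of_regular : regular_mapping p q (tau_of q c).
Proof.
split.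
- move=> w /andP[w0 /allP wq]; rewrite /tau_of; case: ifP => _; first by split; lia.
  have : (last_digit w < q)%N.
    by case: w w0 wq => // a w _ wq; apply: wq; rewrite /last_digit /= mem_last.
  by split; lia.
- by case=> // n _; exact: (@tau_of_tail q c q2 [::] n).
- move=> w _; rewrite /tau_of; case: ifP => [/andP[/eqP hw _]|_].
    rewrite hw /last_digit /special_word last_rcons.
    have -> : (-1 - (q.-1)%:Z = - q%:Z) by lia.
    by rewrite rpredN dvdzz.
  by rewrite subrr dvdz0.
- by move=> w _; exists 1%N => -[|l] // _; exact: tau_of_tail.
Qed.

(* tau_c(I 0^k) = 0 for all k >= 1, so every ell_n is 0. *)
Lemma tau_of_bounded_ell : bounded_ell p q (tau_of q c).
Proof.
exists 0%N => n _ K; rewrite leqn0 -/(nilp _) -leqn0 leqNgt -has_count.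
apply/hasP => -[k]; rewrite mem_iota => /andP[k1 _].
by case: k k1 => // k _; rewrite tau_of_tail // eqxx.
Qed.

End Regularity.

Section Digits.
Variable q : nat.
Hypothesis q2 : (2 <= q)%N.

Lemma digits_fuel f1 f2 n : (n <= f1)%N -> (n <= f2)%N ->
  digits_aux q f1 n = digits_aux q f2 n.
Proof.
elim: f1 f2 n => [|f1 IH] [|f2] n //=; rewrite ?leqn0.
- by move=> /eqP ->.
- by move=> _ /eqP ->.
case: eqP => // /eqP n0 h1 h2; congr (_ :: _).
have lt_n : (n %/ q < n)%N by rewrite ltn_Pdiv // lt0n.
by apply: IH; lia.
Qed.

Lemma digitsE n : (0 < n)%N -> digits q n = (n %% q)%N :: digits q (n %/ q).
Proof.
case: n => // n _; rewrite /digits /=; congr (_ :: _); apply: digits_fuel => //.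
by rewrite -ltnS ltn_Pdiv.
Qed.

Lemma digits_special k : digits q (q.-1 * q ^ k)%N = special_word q k.
Proof.
elim: k => [|k IH].
  rewrite muln1 digitsE ?modn_small ?divn_small //; lia.
rewrite digitsE; last by rewrite muln_gt0 expn_gt0; lia.
by rewrite expnS mulnCA modnMr mulKn ?IH //; lia.
Qed.

Lemma digits_qk1 k : digits q (q * k + 1)%N = 1%N :: digits q k.
Proof.
rewrite digitsE ?addn1 // -addn1 (mulnC q k) modnMDl modn_small //.
by rewrite divnMDl ?divn_small ?addn0 //; lia.
Qed.

End Digits.

Section Spectrum.
Variables (R : realType) (p q : nat).
Hypotheses (q2 : (2 <= q)%N) (qp : (q < p)%N).

(* Since tau_c vanishes on I 0^k, the infinite tail of lambda_n is zero and
   lambda_n is the finite sum word_value. *)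
Lemma lambda_tau_of c n :
  lambda_seq R p q (tau_of q c) n = (word_value p (tau_of q c) (digits q n))%:~R.
Proof.
rewrite /lambda_seq; case: eqP => [->|_]; first by rewrite word_value_nil.
set tail := (X in limn X).
have -> : limn tail = 0.
  rewrite (_ : tail = fun=> 0) ?lim_cst //.
  by apply/funext => M; apply: big1 => k _; rewrite tau_of_tail // mul0r.
rewrite addr0 /word_value rmorph_sum; apply: eq_bigr => j _.
by rewrite rmorphM /= rmorphXn.
Qed.

Lemma Lambda_tau_of_neg_pow c k :
  @Lambda R p q (tau_of q c) ((- p%:Z ^+ k)%:~R) <-> c k.
Proof.
have p2 : (2 <= p)%N by lia.
split=> [[n _]|ck].
  by rewrite lambda_tau_of => /intr_inj; exact: word_value_tau_neg_pow.
exists (q.-1 * q ^ k)%N => //.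
by rewrite lambda_tau_of digits_special // word_value_special // ck.
Qed.

Lemma Lambda_tau_of_inj c1 c2 :
  @Lambda R p q (tau_of q c1) = @Lambda R p q (tau_of q c2) -> c1 = c2.
Proof.
move=> e; apply/funext => k.
apply/idP/idP => ck; apply/Lambda_tau_of_neg_pow; [rewrite -e|rewrite e];
  exact/Lambda_tau_of_neg_pow.
Qed.

End Spectrum.

Definition rebase (p q k : nat) : nat := base_value p (digits q k).

Section Rebase.
Variables p q : nat.
Hypotheses (q2 : (2 <= q)%N) (qp : (q < p)%N).

Lemma rebaseE k : rebase p q k = (k %% q + p * rebase p q (k %/ q))%N.
Proof.
rewrite /rebase; case: k => [|k]; first by rewrite mod0n div0n /= muln0.
by rewrite digitsE.
Qed.

(* Since q <= p, rereading in base p can only increase a number. *)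
Lemma rebase_ge k : (k <= rebase p q k)%N.
Proof.
elim/ltn_ind: k => -[|k] IH //; rewrite rebaseE {1}(divn_eq k.+1 q) addnC.
rewrite leq_add2l mulnC; apply: leq_mul; first exact: ltnW qp.
by apply: IH; rewrite ltn_Pdiv.
Qed.

Lemma euclid_unique a b x y : (a < p)%N -> (b < p)%N ->
  (a + p * x = b + p * y)%N -> a = b /\ x = y.
Proof.
move=> ap bp; rewrite !(addnC _ (p * _)%N) !(mulnC p) => e.
have p0 : (0 < p)%N by case: (p) ap.
split; first by rewrite -(modn_small ap) -(modn_small bp) -(modnMDl x a p) e modnMDl.
by move: (congr1 (divn^~ p) e) => /=; rewrite !divnMDl // !divn_small ?addn0.
Qed.

(* Since q < p, distinct base-q expansions give distinct base-p values. *)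
Lemma rebase_inj : injective (rebase p q).
Proof.
elim/ltn_ind => -[|k1] IH k2 e.
  by apply/eqP; rewrite eq_sym -leqn0 (leq_trans (rebase_ge k2)) // -e.
have modq_lt k : (k %% q < p)%N := ltn_trans (ltn_pmod k (ltnW q2)) qp.
rewrite (rebaseE k1.+1) (rebaseE k2) in e.
have [em ed] := euclid_unique _ _ _ _ (modq_lt _) (modq_lt _) e.
have {}ed := IH _ (ltn_Pdiv q2 (ltn0Sn k1)) _ ed.
by rewrite (divn_eq k1.+1 q) (divn_eq k2 q) em ed.
Qed.

Lemma rebase_lt k N : (k < q ^ N)%N -> (rebase p q k < p ^ N)%N.
Proof.
elim: N k => [|N IH] k; first by rewrite expn0; case: k.
move=> hk; rewrite rebaseE expnS.
have hdiv : (k %/ q < q ^ N)%N by rewrite ltn_divLR ?(ltnW q2) // -expnSr.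
have hmod : (k %% q < p)%N := ltn_trans (ltn_pmod k (ltnW q2)) qp.
have step : (p * rebase p q (k %/ q) + p <= p * p ^ N)%N.
  by rewrite addnC -mulnS leq_mul2l IH ?orbT.
by rewrite addnC; apply: leq_trans step; rewrite ltn_add2l.
Qed.

End Rebase.

Lemma upper_beurling_density_ge (R : realType) (r : R) (L : set R)
    (h : nat -> R) (delta : \bar R) :
  (forall M : R, exists N, M < h N) ->
  (forall N, exists x : R, (delta <=
     (\esum_(y in L `&` [set y : R | (x - h N < y < x + h N)%R]) 1)
     * ((h N `^ r)^-1)%:E)%E) ->
  (delta <= upper_beurling_density r L)%E.
Proof.
move=> h_unbounded count_ge; apply: le_ereal_inf_tmp => _ [V [M [_ MV]] <-].
have [N MN] := h_unbounded M; have [x delta_le] := count_ge N.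
apply: (le_trans delta_le); apply: le_trans (ereal_sup_ubound _); last first.
  by exists (h N); [exact: MV|reflexivity].
by apply: ereal_sup_ubound; exists x.
Qed.

Lemma powR_pq (R : realType) (p q n : nat) : (1 < p)%N -> (0 < q)%N ->
  ((p%:R ^+ n) `^ (ln (q%:R : R) / ln (p%:R : R)) : R) = q%:R ^+ n.
Proof.
move=> p1 q0.
rewrite -powR_mulrn ?ler0n // powRAC powR_mulrn ?powR_ge0 //; congr (_ ^+ n).
have lp : ln (p%:R : R) != 0 by rewrite gt_eqF // ln_gt0 // ltr1n.
rewrite /powR pnatr_eq0 (_ : (p == 0)%N = false); last by case: p p1 lp.
by rewrite divfK // lnK // posrE ltr0n.
Qed.

Section Density.
Variables (R : realType) (p q : nat) (c : nat -> bool).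
Hypotheses (q2 : (2 <= q)%N) (qp : (q < p)%N) (c0 : c 0%N = false).

Lemma lambda_qk1 k :
  lambda_seq R p q (tau_of q c) (q * k + 1)%N = (1 + p * rebase p q k)%N%:R.
Proof.
rewrite lambda_tau_of // digits_qk1 // word_value_tau_consd //.
rewrite {1}/tau_of c0 andbF /= rmorphD rmorph1 rmorphM /= natrD natrM.
by rewrite !pmulrn.
Qed.

Lemma Lambda_count_ge N :
  (((q ^ N)%N%:R)%:E <= \esum_(y in @Lambda R p q (tau_of q c) `&`
      [set y : R | (0 - (p ^ N.+1)%N%:R < y < 0 + (p ^ N.+1)%N%:R)%R])
     (1 : \bar R))%E.
Proof.
pose f k : R := (1 + p * rebase p q k)%N%:R.
have f_inj : set_inj `I_(q ^ N) f.
  move=> a b _ _ /eqP; rewrite /f eqr_nat eqn_add2l eqn_mul2l.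
  case/orP=> [/eqP p0|/eqP e].
    by move: qp; rewrite p0.
  exact: rebase_inj e.
apply: esum_ge; exists (f @` `I_(q ^ N)).
  split; first exact/finite_image/finite_II.
  move=> y [k /= kN <-]; split.
    by exists (q * k + 1)%N => //; rewrite lambda_qk1.
  have := @rebase_lt p q q2 qp k N kN.
  rewrite /= sub0r add0r /f ltr_nat expnS => hlt; apply/andP; split.
    by apply: lt_le_trans (ler0n _ _); rewrite oppr_lt0 ltr0n muln_gt0 expn_gt0; lia.
  have : (p * rebase p q k + p <= p * p ^ N)%N.
    by rewrite addnC -mulnS leq_mul2l hlt orbT.
  lia.
by rewrite fsbig_image // -fsbig_ord sumEFin sumr_const card_ord.
Qed.

Lemma Lambda_density_pos :
  (0 < upper_beurling_density (ln (q%:R : R) / ln (p%:R : R))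
         (@Lambda R p q (tau_of q c)))%E.
Proof.
have q0 : (0 < q%:R :> R) by rewrite ltr0n; lia.
apply: (@lt_le_trans _ _ ((q%:R : R)^-1)%:E); first by rewrite lte_fin invr_gt0.
apply: (@upper_beurling_density_ge R _ _ (fun N => (p ^ N.+1)%N%:R)).
  move=> M; exists (Num.bound `|M|).
  have hn : (Num.bound `|M| < p ^ (Num.bound `|M|).+1)%N.
    by have := @ltn_expl p (Num.bound `|M|).+1 ltac:(lia); lia.
  apply: le_lt_trans (real_ler_norm (num_real M)) _.
  by apply: lt_trans (archi_boundP (normr_ge0 M)) _; rewrite ltr_nat.
move=> N; exists 0.
rewrite (_ : (p ^ N.+1)%N%:R `^ _ = q%:R ^+ N.+1); last first.
  by rewrite natrX powR_pq //; lia.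
apply: le_trans (lee_wpmul2r _ (Lambda_count_ge N)); last first.
  by rewrite lee_fin invr_ge0 exprn_ge0 // ltW.
rewrite -EFinM lee_fin natrX exprS invfM mulrCA mulfV ?mulr1 //.
by rewrite expf_neq0 // gt_eqF.
Qed.

End Density.

(* Cantor's diagonal argument: nat -> bool does not inject into nat. *)
Lemma no_injection_from_bool_seq (g : (nat -> bool) -> nat) : ~ injective g.
Proof.
move=> g_inj; pose d k := ~~ `[< exists b, g b = k /\ b k >].
case dgd: (d (g d)); move: (dgd); rewrite {1}/d; case: asboolP => //.
- by move=> nb _; apply: nb; exists d.
- by move=> [b [/g_inj -> bg]]; rewrite dgd in bg.
Qed.

Definition prepend_false (b : nat -> bool) : nat -> bool :=
  fun m => if m is m'.+1 then b m' else false.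

Lemma prepend_false_inj : injective prepend_false.
Proof.
by move=> b1 b2 e; apply/funext => m; exact: (congr1 (fun c => c m.+1) e).
Qed.

Theorem theorem1p6 (R : realType) (p q : nat) :
  (2 <= q)%N -> (q < p)%N -> (q %| p)%N ->
  let s : R := ln (q%:R : R) / ln (p%:R : R) in
  exists S : set (seq nat -> int),
    ~ countable S /\
    (forall tau, S tau -> regular_mapping p q tau /\ bounded_ell p q tau) /\
    (forall tau1 tau2, S tau1 -> S tau2 -> tau1 <> tau2 ->
        @Lambda R p q tau1 <> @Lambda R p q tau2) /\
    (forall tau, S tau -> (0 < upper_beurling_density s (@Lambda R p q tau))%E).
Proof.
move=> q2 qp _ s.
have tau_inj c1 c2 : tau_of q c1 = tau_of q c2 -> c1 = c2.
  by move=> e; apply: (@Lambda_tau_of_inj R p q q2 qp); rewrite e.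
exists (tau_of q @` [set c | c 0%N = false]); split; [|split; [|split]].
- move=> /countable_injP[f f_inj].
  apply: (@no_injection_from_bool_seq (fun b => f (tau_of q (prepend_false b)))).
  move=> b1 b2 e; apply/prepend_false_inj/tau_inj.
  apply: f_inj => //; rewrite inE.
  + by exists (prepend_false b1).
  + by exists (prepend_false b2).
- by move=> _ [c _ <-]; split; [exact: tau_of_regular|exact: tau_of_bounded_ell].
- by move=> _ _ [c1 _ <-] [c2 _ <-] ne /Lambda_tau_of_inj e; apply: ne; rewrite e.
- by move=> _ [c c0 <-]; exact: Lambda_density_pos.
Qed.
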